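(* Let $\mathbb F_q$ be a finite field with $q$ elements, let $n\ge 2$, let $a_1,\dots,a_n\in\mathbb F_q^*$, let $m_1,\dots,m_n$ be positive integers and put $d_j=\gcd(m_j,q-1)$ for $j=1,\dots,n$. If $d_1,\dots,d_n$ are pairwise coprime, then the number of $(x_1,\dots,x_n)\in\mathbb F_q^n$ with $x_1\cdots x_n\ne 0$ satisfying $$a_1x_1^{d_1}+\dots+a_nx_n^{d_n}=0$$ equals $$\frac{(q-1)^n+(-1)^n(q-1)}{q}.$$
   Context: $\mathbb F_q^*=\mathbb F_q\setminus\{0\}$. *)

From HB Require Import structures.
From mathcomp Require Import all_boot all_order all_algebra all_field.
Set Implicit Arguments. Unset Strict Implicit. Unset Printing Implicit Defensive.

From HB Require Import structures.
From mathcomp Require Import all_boot all_order all_algebra all_field.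
From mathcomp Require Import cyclic ring.
Import GRing.Theory Num.Theory.
Set Implicit Arguments. Unset Strict Implicit. Unset Printing Implicit Defensive.

(* Put Q = q - 1 and let U be the cyclic group of units of F, generated by g.
   The map (t, x) |-> (x_i^(d_i) / t)_i is a group homomorphism from U^(n+1)
   to U^n. A kernel element (g^k, x) exists exactly when every d_i divides k,
   i.e. when D = d_1 ... d_n divides k (the d_i being pairwise coprime), and
   then there are D choices of x; hence the kernel has (Q / D) * D = Q
   elements. Every nonempty fibre is a coset of the kernel, and since the
   source is Q times larger than the target, all fibres have exactly Q
   elements. Counting the pairs (t, x) sent to solutions of the linear equation
   a_1 y_1 + ... + a_n y_n = 0 shows that the diagonal and the linear equation
   have the same number of solutions in U^n. That number N_n satisfies N_0 = 1
   and N_(n+1) + N_n = Q^n: given nonzero y_1, ..., y_n, the last coordinate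
   is determined, and nonzero exactly when a_1 y_1 + ... + a_n y_n != 0. *)

Lemma sum_residue_class e r d : (r < e)%N ->
  (\sum_(0 <= j < d * e) (j %% e == r) = d)%N.
Proof.
move=> lt_re; elim: d => [|d IHd]; first by rewrite mul0n big_geq.
rewrite mulSnr (@big_cat_nat _ _ _ (d * e)) ?leq_addr //= IHd.
rewrite -{1}(add0n (d * e)) big_addn addKn big_mkord.
rewrite (eq_bigr (fun j : 'I_e => (j == Ordinal lt_re : nat))); last first.
  by move=> j _; rewrite addnC modnMDl modn_small.
by rewrite -big_mkcond big_pred1_eq addn1.
Qed.

Lemma sum_dvdn_ord k q : (0 < k)%N -> (k %| q)%N ->
  (\sum_(j < q) (k %| j) = q %/ k)%N.
Proof.
move=> k_gt0 dvd_kq; rewrite -(big_mkord xpredT (fun j => (k %| j) : nat)).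
by rewrite -{1}(divnK dvd_kq) sum_residue_class.
Qed.

Lemma sum_eqmod_mul d q k : (d %| q)%N -> (0 < q)%N ->
  (\sum_(j < q) (j * d == k %[mod q]) = if d %| k then d else 0)%N.
Proof.
move=> dvd_dq q_gt0; have d_gt0 := dvdn_gt0 q_gt0 dvd_dq.
rewrite -(big_mkord xpredT (fun j => (j * d == k %[mod q]) : nat)) -(divnK dvd_dq).
set e := (q %/ d)%N; have e_gt0 : (0 < e)%N by rewrite divn_gt0 // dvdn_leq.
case: ifP => [/dvdnP[c ->] | not_dvd_dk].
  under eq_bigr do rewrite -!muln_modl (eqn_pmul2r d_gt0).
  by rewrite mulnC sum_residue_class // ltn_pmod.
rewrite big1 // => j _; case: eqP => // jd_k; case/negP: not_dvd_dk.
have dvd_d_ed : (d %| e * d)%N by apply: dvdn_mull.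
by rewrite /dvdn -(modn_dvdm k dvd_d_ed) -jd_k modn_dvdm // modnMl.
Qed.

Lemma dvdn_prod_coprime (I : finType) (d : I -> nat) k :
  (forall i j, i != j -> coprime (d i) (d j)) -> (forall i, d i %| k) ->
  (\prod_i d i %| k)%N.
Proof.
move=> d_coprime dvd_dk; rewrite -big_enum /=.
elim: (enum I) (enum_uniq I) => [|i r IHr] /=; first by rewrite big_nil dvd1n.
case/andP=> i_notin_r r_uniq; rewrite big_cons Gauss_dvd ?dvd_dk ?IHr //.
rewrite big_seq; apply: (big_ind (coprime (d i))) => [|x y cx cy|j j_in_r].
- exact: coprimen1.
- by rewrite coprimeMr cx.
- by apply: d_coprime; apply: contraNneq i_notin_r => ->.
Qed.

Lemma card_ffun_forall (aT rT : finType) (P : aT -> pred rT) :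
  #|[set x : {ffun aT -> rT} | [forall i, P i (x i)]]| = (\prod_i #|P i|)%N.
Proof.
have -> : #|[set x : {ffun aT -> rT} | [forall i, P i (x i)]]| = #|family P|.
  by apply: eq_card => x; rewrite inE; apply/forallP/familyP.
by rewrite card_family foldrE big_map big_enum.
Qed.

Lemma card_pairs (I J : finType) (P : I -> J -> bool) :
  #|[set p : I * J | P p.1 p.2]| = (\sum_i #|[set j | P i j]|)%N.
Proof.
rewrite (eq_bigr (fun i => \sum_j (P i j : nat))%N) => [|i _]; last first.
  by rewrite -sum1_card big_mkcond; apply: eq_bigr => j _; rewrite inE.
rewrite pair_big -sum1_card big_mkcond; apply: eq_bigr => p _; rewrite inE.
by case: (P _ _).
Qed.

Section Fibres.
Variables (aT rT : finType) (f : aT -> rT) (A : {set aT}).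

Lemma card_preimset_sum (W : {set rT}) :
  #|[set a in A | f a \in W]| = (\sum_(b in W) #|[set a in A | f a == b]|)%N.
Proof.
rewrite -sum1_card (partition_big f (mem W)) => [|a]; last by rewrite inE => /andP[].
apply: eq_bigr => b W_b; rewrite -sum1_card; apply: eq_bigl => a.
rewrite !inE; case: eqP => [->|_]; last by rewrite !andbF.
by rewrite (W_b : b \in W) !andbT.
Qed.

Variables (B : {set rT}) (c : nat).
Hypothesis f_A_B : {in A, forall a, f a \in B}.
Hypothesis card_fibre_le : forall b, b \in B -> (#|[set a in A | f a == b]| <= c)%N.
Hypothesis card_A : #|A| = (#|B| * c)%N.

Lemma card_fibre_eq b : b \in B -> #|[set a in A | f a == b]| = c.
Proof.
have := leqif_sum (P := mem B) (fun b' B_b' => leqif_eq (card_fibre_le B_b')).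
rewrite -card_preimset_sum sum_nat_const.
have -> : [set a in A | f a \in B] = A.
  by apply/setP => a; rewrite inE; case: (boolP (a \in A)) => // /f_A_B.
rewrite card_A => /leqif_refl/forall_inP all_eq B_b; exact/eqP/all_eq.
Qed.

Lemma card_preimset_uniform (W : {set rT}) : W \subset B ->
  #|[set a in A | f a \in W]| = (#|W| * c)%N.
Proof.
move=> /subsetP sub_WB; rewrite card_preimset_sum -sum_nat_const.
by apply: eq_bigr => b /sub_WB; apply: card_fibre_eq.
Qed.

End Fibres.

Section FfunRcons.
Variables (T : finType) (n : nat).

Definition ffun_rcons (x : {ffun 'I_n -> T}) (u : T) : {ffun 'I_n.+1 -> T} :=
  [ffun i => if unlift ord_max i is Some j then x j else u].

Lemma ffun_rcons_widen x u j : ffun_rcons x u (widen_ord (leqnSn n) j) = x j.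
Proof.
have -> : widen_ord (leqnSn n) j = lift ord_max j by apply: ord_inj; rewrite lift_max.
by rewrite ffunE liftK.
Qed.

Lemma ffun_rcons_max x u : ffun_rcons x u ord_max = u.
Proof. by rewrite ffunE unlift_none. Qed.

Lemma card_ffunS (A : {set {ffun 'I_n.+1 -> T}}) :
  #|A| = (\sum_x #|[set u | ffun_rcons x u \in A]|)%N.
Proof.
pose join (p : {ffun 'I_n -> T} * T) := ffun_rcons p.1 p.2.
have join_inj : injective join.
  move=> [x u] [x' u']; rewrite /join /= => eq_xu; congr pair; last first.
    by rewrite -(ffun_rcons_max x u) eq_xu ffun_rcons_max.
  by apply/ffunP => j; rewrite -(ffun_rcons_widen x u) eq_xu ffun_rcons_widen.
pose split (y : {ffun 'I_n.+1 -> T}) :=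
  ([ffun j => y (widen_ord (leqnSn n) j)], y ord_max).
have splitK y : join (split y) = y.
  apply/ffunP => i; rewrite ffunE; case: unliftP => [j ->|->] //=.
  by rewrite ffunE; congr (y _); apply: ord_inj; rewrite lift_max.
transitivity #|[set p | join p \in A]|; last exact: card_pairs.
rewrite -(card_imset _ join_inj); apply: eq_card => y.
apply/idP/imsetP => [A_y | [p + ->]]; last by rewrite inE.
by exists (split y); rewrite ?inE splitK.
Qed.

End FfunRcons.

Lemma prod_dvdn_if (I : finType) (d : I -> nat) k :
    (forall i j, i != j -> coprime (d i) (d j)) ->
  (\prod_i (if d i %| k then d i else 0) =
   if \prod_i d i %| k then \prod_i d i else 0)%N.
Proof.
move=> d_coprime; case: ifP => [dvd_Dk | not_dvd_Dk].
  apply: eq_bigr => i _; rewrite (dvdn_trans _ dvd_Dk) //.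
  by rewrite (bigD1 i) //= dvdn_mulr.
have [i not_dvd_ik] : exists i, ~~ (d i %| k).
  apply/existsP; apply: contraFT not_dvd_Dk => /existsPn all_dvd.
  by apply: dvdn_prod_coprime => // i; have := all_dvd i; rewrite negbK.
by rewrite (bigD1 i) //= (negbTE not_dvd_ik) mul0n.
Qed.

Local Open Scope ring_scope.

Section FiniteField.
Variable F : finFieldType.
Local Notation Q := #|F|.-1.

Lemma card_nonzero : #|[set t : F | t != 0]| = Q.
Proof. by rewrite -(cardC1 0); apply: eq_card => t; rewrite inE. Qed.

Lemma predn_card_gt0 : (0 < Q)%N.
Proof. by rewrite ltn_predRL finNzRing_gt1. Qed.

Lemma expf_predn_card (x : F) : x != 0 -> x ^+ Q = 1.
Proof.
move=> x_neq0; apply: (mulfI x_neq0).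
by rewrite -exprS (ltn_predK (finNzRing_gt1 F)) expf_card mulr1.
Qed.

Lemma finField_prim_root : exists g : F, Q.-primitive_root g.
Proof.
have : has Q.-primitive_root (enum (predC1 (0 : F))).
  apply: has_prim_root; rewrite ?predn_card_gt0 ?enum_uniq -?cardE ?cardC1 //.
  by apply/allP => x; rewrite mem_enum unity_rootE => /expf_predn_card ->.
by case/hasP => g _ g_prim; exists g.
Qed.

Lemma card_nonzero_root_affine (s c : F) : c != 0 ->
  #|[set u : F | (u != 0) && (s + c * u == 0)]| = (s != 0).
Proof.
move=> c_neq0; have [-> | s_neq0] := eqVneq s 0.
  apply/eqP; rewrite cards_eq0; apply/eqP/setP => u.
  by rewrite !inE add0r mulf_eq0 (negbTE c_neq0) andNb.
rewrite /= -(cards1 (- s / c)); apply: eq_card => u; rewrite !inE.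
apply/andP/eqP => [[_ /eqP root_u] | ->].
  apply: (mulfI c_neq0); rewrite [RHS]mulrC divfK //.
  by rewrite -(addKr s (c * u)) root_u addr0.
by rewrite mulf_neq0 ?oppr_eq0 ?invr_neq0 // mulrC divfK // addrN.
Qed.

Section PrimitiveRoot.
Variables (g : F) (g_prim : Q.-primitive_root g).

Lemma prim_expr_neq0 k : g ^+ k != 0.
Proof. by rewrite expf_neq0 // (prim_root_eq0 g_prim) -lt0n predn_card_gt0. Qed.

Lemma sum_nonzero_prim_expr (f : F -> nat) :
  (\sum_(x : F | x != 0%R) f x = \sum_(k < Q) f (g ^+ k))%N.
Proof.
have exp_inj : injective (fun k : 'I_Q => g ^+ k).
  move=> i j /eqP; rewrite (eq_prim_root_expr g_prim) !modn_small // => /eqP.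
  exact: val_inj.
rewrite -(big_imset _ (in2W exp_inj)) /=; apply: eq_bigl => x.
apply/idP/imsetP => [x_neq0 | [k _ ->]]; last exact: prim_expr_neq0.
by have [k ->] := prim_rootP g_prim (expf_predn_card x_neq0); exists k.
Qed.

Lemma card_roots_prim_expr d k : (d %| Q)%N ->
  #|[set u : F | u ^+ d == g ^+ k]| = if (d %| k)%N then d else 0%N.
Proof.
move=> dvd_dQ; have d_gt0 := dvdn_gt0 predn_card_gt0 dvd_dQ.
have -> : #|[set u : F | u ^+ d == g ^+ k]| =
    (\sum_(u : F | u != 0%R) (u ^+ d == g ^+ k))%N.
  rewrite -sum1_card big_mkcond [RHS]big_mkcond; apply: eq_bigr => u _; rewrite inE.
  have [->|//] := eqVneq u 0.
  by rewrite expr0n gtn_eqF // eq_sym (negbTE (prim_expr_neq0 k)).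
rewrite sum_nonzero_prim_expr -(sum_eqmod_mul k dvd_dQ predn_card_gt0).
by apply: eq_bigr => j _; rewrite -exprM (eq_prim_root_expr g_prim).
Qed.

End PrimitiveRoot.

Definition nonzero_ffun (aT : finType) : {set {ffun aT -> F}} :=
  [set x : {ffun aT -> F} | [forall i, x i != 0]].

Lemma card_nonzero_ffun (aT : finType) : #|nonzero_ffun aT| = (Q ^ #|aT|)%N.
Proof.
rewrite (card_ffun_forall (fun _ u => u != 0)) (eq_bigr (fun _ => Q)) => [|i _].
  by rewrite prod_nat_const.
by rewrite -card_nonzero; apply: eq_card => u; rewrite inE.
Qed.

Definition solutions n (a : 'I_n -> F) (d : 'I_n -> nat) : {set {ffun 'I_n -> F}} :=
  [set x : {ffun 'I_n -> F} | [forall i, x i != 0] & \sum_i a i * x i ^+ d i == 0].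

Section DiagonalMap.
Variables (n : nat) (d : 'I_n -> nat).
Hypothesis d_dvd : forall i, (d i %| Q)%N.
Hypothesis d_coprime : forall i j, i != j -> coprime (d i) (d j).
Local Notation T := {ffun 'I_n -> F}.

Definition units_pairs : {set F * T} := setX [set t | t != 0] (nonzero_ffun 'I_n).

Definition diag_map (p : F * T) : T := [ffun i => p.2 i ^+ d i / p.1].

Lemma diag_map_nonzero : {in units_pairs, forall p, diag_map p \in nonzero_ffun 'I_n}.
Proof.
move=> [t x]; rewrite !inE => /andP[t_neq0 /forallP x_neq0].
by apply/forallP => i; rewrite ffunE mulf_neq0 ?invr_neq0 ?expf_neq0.
Qed.

Lemma card_diag_kernel : #|[set p in units_pairs | diag_map p == [ffun => 1]]| = Q.
Proof.
have [g g_prim] := finField_prim_root.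
set D := (\prod_i d i)%N.
have dvd_DQ : (D %| Q)%N by apply: dvdn_prod_coprime.
have -> : [set p in units_pairs | diag_map p == [ffun=> 1]] =
    [set p : F * T | (p.1 != 0) && [forall i, p.2 i ^+ d i == p.1]].
  apply/setP => -[t x]; rewrite !inE /=.
  apply/andP/andP => [[/andP[t_neq0 _] /eqP/ffunP one_x] | [t_neq0 /forallP root_x]].
    split=> //; apply/forallP => i; apply/eqP/divr1_eq.
    by have := one_x i; rewrite !ffunE.
  split; last by apply/eqP/ffunP => i; rewrite !ffunE (eqP (root_x i)) divff.
  rewrite t_neq0; apply/forallP => i; apply: contra_neq t_neq0 => x_i0.
  by rewrite -(eqP (root_x i)) x_i0 expr0n gtn_eqF ?(dvdn_gt0 predn_card_gt0).
rewrite (card_pairs (fun t (x : T) => (t != 0) && [forall i, x i ^+ d i == t])).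
rewrite (bigID (fun t => t != 0)) /= [X in (_ + X)%N]big1 ?addn0; last first.
  by move=> t /negPn/eqP ->; apply: eq_card0 => x; rewrite inE eqxx.
rewrite (sum_nonzero_prim_expr g_prim).
rewrite (eq_bigr (fun k : 'I_Q => (D %| k) * D)%N) => [|k _].
  by rewrite -big_distrl /= sum_dvdn_ord ?divnK ?(dvdn_gt0 predn_card_gt0).
rewrite (prim_expr_neq0 g_prim) /=.
have := card_ffun_forall (fun i u => u ^+ d i == g ^+ k); rewrite /= => ->.
rewrite (eq_bigr (fun i => if d i %| k then d i else 0)%N) => [|i _].
  by rewrite prod_dvdn_if // -/D; case: (D %| k)%N; rewrite ?mul1n.
rewrite -(card_roots_prim_expr g_prim k (d_dvd i)).
by apply: eq_card => u; rewrite inE.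
Qed.

Lemma card_diag_fibre_le y : y \in nonzero_ffun 'I_n ->
  (#|[set p in units_pairs | diag_map p == y]| <= Q)%N.
Proof.
rewrite inE => /forallP y_neq0.
have [-> | [p0]] := set_0Vmem [set p in units_pairs | diag_map p == y].
  by rewrite cards0.
rewrite !inE => /andP[/andP[t0_neq0 /forallP x0_neq0] /eqP/ffunP y_p0].
pose shift (p : F * T) := (p.1 / p0.1, [ffun i => p.2 i / p0.2 i]).
have shift_inj : injective shift.
  move=> [t x] [t' x'] [/(mulIf (invr_neq0 t0_neq0)) -> /ffunP eq_x]; congr pair.
  apply/ffunP => i; have := eq_x i; rewrite !ffunE.
  by apply: mulIf; rewrite invr_neq0.
rewrite -card_diag_kernel -(card_imset _ shift_inj).
apply/subset_leq_card/subsetP => _ /imsetP[p + ->].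
rewrite !inE => /andP[/andP[t_neq0 /forallP x_neq0] /eqP/ffunP y_p].
rewrite /= mulf_neq0 ?invr_neq0 //=; apply/andP; split.
  by apply/forallP => i; rewrite ffunE mulf_neq0 ?invr_neq0.
apply/eqP/ffunP => i; rewrite !ffunE expr_div_n.
have := y_p i; have := y_p0 i; rewrite !ffunE => y_p0_i y_p_i.
have -> : p.2 i ^+ d i = y i * p.1 by rewrite -y_p_i divfK.
have -> : p0.2 i ^+ d i = y i * p0.1 by rewrite -y_p0_i divfK.
by rewrite /=; field; rewrite y_neq0 t_neq0 t0_neq0.
Qed.

Lemma card_solutions_coprime (a : 'I_n -> F) :
  #|solutions a d| = #|solutions a (fun=> 1%N)|.
Proof.
have card_units_pairs : #|units_pairs| = (#|nonzero_ffun 'I_n| * Q)%N.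
  by rewrite cardsX card_nonzero mulnC.
have sub_lin : solutions a (fun=> 1%N) \subset nonzero_ffun 'I_n.
  by apply/subsetP => y; rewrite !inE => /andP[].
have := card_preimset_uniform diag_map_nonzero card_diag_fibre_le
  card_units_pairs sub_lin.
have -> : [set p in units_pairs | diag_map p \in solutions a (fun=> 1%N)] =
    setX [set t | t != 0] (solutions a d).
  apply/setP => -[t x]; rewrite !inE /=.
  have [-> | t_neq0] := eqVneq t 0; first by [].
  case: (boolP [forall i, x i != 0]) => //= x_neq0.
  have := @diag_map_nonzero (t, x); rewrite !inE t_neq0 x_neq0 => /(_ isT) -> /=.
  under eq_bigr do rewrite expr1 ffunE mulrA.
  by rewrite -big_distrl /= mulf_eq0 invr_eq0 (negbTE t_neq0) orbF.
rewrite cardsX card_nonzero mulnC => /eqP.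
by rewrite eqn_pmul2r ?predn_card_gt0 // => /eqP.
Qed.

End DiagonalMap.

Lemma nonzero_ffun_rcons n (x : {ffun 'I_n -> F}) u :
  [forall i, ffun_rcons x u i != 0] = [forall j, x j != 0] && (u != 0).
Proof.
apply/forallP/andP => [x_u_neq0 | [/forallP x_neq0 u_neq0] i].
  split; last by have := x_u_neq0 ord_max; rewrite ffun_rcons_max.
  apply/forallP => j.
  by have := x_u_neq0 (widen_ord (leqnSn n) j); rewrite ffun_rcons_widen.
by rewrite ffunE; case: unliftP.
Qed.

Lemma sum_ffun_rcons n (c : 'I_n.+1 -> F) (e : 'I_n.+1 -> nat) x u :
  \sum_i c i * ffun_rcons x u i ^+ e i =
  \sum_j c (widen_ord (leqnSn n) j) * x j ^+ e (widen_ord (leqnSn n) j) +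
  c ord_max * u ^+ e ord_max.
Proof.
by rewrite big_ord_recr ffun_rcons_max; under eq_bigr do rewrite ffun_rcons_widen.
Qed.

Lemma card_solutions1_rcons n (a : 'I_n.+1 -> F) x : a ord_max != 0 ->
  #|[set u | ffun_rcons x u \in solutions a (fun=> 1%N)]| =
  [forall j, x j != 0] && (\sum_j a (widen_ord (leqnSn n) j) * x j ^+ 1 != 0).
Proof.
move=> a_max_neq0; case: (boolP [forall j, x j != 0]) => x_neq0 /=; last first.
  by apply: eq_card0 => u; rewrite !inE nonzero_ffun_rcons (negbTE x_neq0).
rewrite -(card_nonzero_root_affine _ a_max_neq0); apply: eq_card => u.
by rewrite !inE nonzero_ffun_rcons sum_ffun_rcons expr1 x_neq0.
Qed.

Lemma card_solutions1S n (a : 'I_n.+1 -> F) : (forall i, a i != 0) ->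
  (#|solutions a (fun=> 1%N)| +
   #|solutions (fun j => a (widen_ord (leqnSn n) j)) (fun=> 1%N)| = Q ^ n)%N.
Proof.
move=> a_neq0; set a' := fun j : 'I_n => a (widen_ord (leqnSn n) j).
rewrite card_ffunS (eq_bigr _ (fun x _ => card_solutions1_rcons x (a_neq0 ord_max))).
have -> : #|solutions a' (fun=> 1%N)| =
    (\sum_(x : {ffun 'I_n -> F})
       ([forall j, x j != 0%R] && (\sum_j a' j * x j ^+ 1 == 0)%R))%N.
  by rewrite -sum1_card big_mkcond; apply: eq_bigr => x _; rewrite inE.
have -> : (Q ^ n)%N = #|nonzero_ffun 'I_n| by rewrite card_nonzero_ffun card_ord.
rewrite -big_split -sum1_card [RHS]big_mkcond.
by apply: eq_bigr => x _; rewrite inE; case: [forall j, _]; case: (_ == 0).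
Qed.

Lemma card_solutions1 n (a : 'I_n -> F) : (forall i, a i != 0) ->
  (#|solutions a (fun=> 1%N)|%:R : rat) =
  ((#|F|%:R - 1) ^+ n + (-1) ^+ n * (#|F|%:R - 1)) / #|F|%:R.
Proof.
have qE : (#|F|%:R : rat) = Q%:R + 1 by rewrite natr1 (ltn_predK (finNzRing_gt1 F)).
have q_neq0 : (Q%:R + 1 : rat) != 0 by rewrite natr1 pnatr_eq0.
rewrite qE addrK; elim: n a => [|n IHn] a a_neq0.
  have -> : solutions a (fun=> 1%N) = setT.
    by apply/setP => x; rewrite !inE big_ord0 eqxx andbT; apply/forallP => -[].
  by rewrite cardsT card_ffun card_ord expn0 !expr0 mul1r addrC divff.
have := congr1 (fun k => k%:R : rat) (card_solutions1S a_neq0).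
rewrite /= natrD natrX (IHn _ (fun j => a_neq0 _)) => /(canRL (addrK _)) ->.
apply: (mulIf q_neq0); rewrite mulrBl !divfK // !exprS.
ring.
Qed.

End FiniteField.

Theorem corollary1 (F : finFieldType) (n : nat) (a : 'I_n -> F)
    (m : 'I_n -> nat) :
  (2 <= n)%N ->
  (forall i, a i != 0) ->
  (forall i, (0 < m i)%N) ->
  (forall i j, i != j ->
     coprime (gcdn (m i) (#|F| - 1)) (gcdn (m j) (#|F| - 1))) ->
  (#|[set x : {ffun 'I_n -> F} |
       [forall i, x i != 0] &&
       (\sum_(i < n) a i * x i ^+ (gcdn (m i) (#|F| - 1)) == 0)]|%:R : rat)
  = ((#|F|%:R - 1) ^+ n + (-1) ^+ n * (#|F|%:R - 1)) / #|F|%:R.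
Proof.
move=> _ a_neq0 _ d_coprime; rewrite -(card_solutions1 a_neq0).
by congr (_%:R); apply: card_solutions_coprime => // i; rewrite -subn1 dvdn_gcdr.
Qed.
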